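(* Let $P_{II*}=P_{II}$. For partitions $\xi,\upsilon\in P_I$, one has $\mathcal C_{\uparrow\{\downarrow\{\xi\}\}\text{-unc}}=\mathcal C_{\uparrow\{\downarrow\{\upsilon\}\}\text{-unc}}$ if and only if $\xi=\upsilon$.
   Context: Let $n\ge1$, $L=\{1,\dots,n\}$, and for $i\in L$ let $\mathcal H_i$ be a Hilbert space with $1<\dim\mathcal H_i<\infty$; $\mathcal H_X=\bigotimes_{i\in X}\mathcal H_i$ and $\mathcal D_X$ is the set of density operators on $\mathcal H_X$. $P_I$ is the set of partitions of $L$ ordered by refinement. For $\xi\in P_I$, $\mathcal D_{\xi\text{-unc}}=\{\varrho\in\mathcal D_L:\varrho=\bigotimes_{X\in\xi}\varrho_X,\ \varrho_X\in\mathcal D_X\}$, and for $S\subseteq P_I$, $\mathcal D_{S\text{-unc}}=\bigcup_{\xi\in S}\mathcal D_{\xi\text{-unc}}$. $P_{II}$ is the set of nonempty down-sets of $P_I$, ordered by inclusion; $P_{III*}$ is the set of nonempty up-sets of $P_{II*}$. $\downarrow\{\xi\}=\{\upsilon\in P_I:\upsilon\preceq\xi\}$ and $\uparrow\{\boldsymbol\zeta\}=\{\boldsymbol\upsilon\in P_{II}:\boldsymbol\zeta\subseteq\boldsymbol\upsilon\}$. For $\Xi\in P_{III*}$: $\overline\Xi=P_{II*}\setminus\Xi$ and $\mathcal C_{\Xi\text{-unc}}=\bigcap_{\boldsymbol\xi'\in\overline\Xi}(\mathcal D_L\setminus\mathcal D_{\boldsymbol\xi'\text{-unc}})\cap\bigcap_{\boldsymbol\xi\in\Xi}\mathcal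 D_{\boldsymbol\xi\text{-unc}}$. *)

From HB Require Import structures.
From mathcomp Require Import all_boot all_order all_algebra all_field.
Set Implicit Arguments. Unset Strict Implicit. Unset Printing Implicit Defensive.
Import Order.TTheory GRing.Theory Num.Theory.
Local Open Scope ring_scope.

Section Defs.
Variables (n : nat) (d : 'I_n -> nat).

(* Subsystems L = 'I_n; X : {set 'I_n}.  Orthonormal product basis of
   H_X = (x)_{i in X} C^{d i}: dependent functions on the elements of X. *)
Definition sub (X : {set 'I_n}) := {i : 'I_n | i \in X}.
Definition conf (X : {set 'I_n}) := {dffun forall i : sub X, 'I_(d (val i))}.

(* Linear operators on H_X, as matrices in the product basis. *)
Definition op (X : {set 'I_n}) := conf X -> conf X -> algC.

Definition trace X (A : op X) : algC := \sum_(a : conf X) A a a.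

Definition psd X (A : op X) : Prop :=
  forall v : conf X -> algC,
    0 <= \sum_(a : conf X) \sum_(b : conf X) (v a)^* * A a b * v b.

Definition density X (A : op X) : Prop := psd A /\ trace A = 1.

Definition restr (X : {set 'I_n}) (a : conf [set: 'I_n]) : conf X :=
  [ffun j : sub X => a (exist (fun i => i \in [set: 'I_n]) (val j) (in_setT (val j)))].

Definition PI : {set {set {set 'I_n}}} := [set P | partition P [set: 'I_n]].

Definition finer (u x : {set {set 'I_n}}) : bool :=
  [forall B in u, exists C in x, B \subset C].

Definition D_unc (xi : {set {set 'I_n}}) (rho : op [set: 'I_n]) : Prop :=
  density rho /\
  exists f : forall X : {set 'I_n}, op X,
    (forall X, X \in xi -> density (f X)) /\
    (forall a b, rho a b = \prod_(X in xi) f X (restr X a) (restr X b)).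

Definition DS_unc (S : {set {set {set 'I_n}}}) (rho : op [set: 'I_n]) : Prop :=
  exists2 xi, xi \in S & D_unc xi rho.

Definition down (xi : {set {set 'I_n}}) : {set {set {set 'I_n}}} :=
  [set u in PI | finer u xi].

Definition PII : {set {set {set {set 'I_n}}}} :=
  [set S : {set {set {set 'I_n}}} | [&& S \subset PI, S != set0 &
            [forall x in S, forall u in PI, finer u x ==> (u \in S)]]].

Definition up (Z : {set {set {set 'I_n}}}) : {set {set {set {set 'I_n}}}} :=
  [set S in PII | Z \subset S].

(* C_{Xi-unc}, with complement taken in P_II* = P_II *)
Definition C_unc (Xi : {set {set {set {set 'I_n}}}}) (rho : op [set: 'I_n]) : Prop :=
  (forall S, S \in PII -> S \notin Xi -> ~ DS_unc S rho) /\
  (forall S, S \in Xi -> DS_unc S rho).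

End Defs.

From HB Require Import structures.
From mathcomp Require Import all_boot all_order all_algebra all_field.
Set Implicit Arguments. Unset Strict Implicit. Unset Printing Implicit Defensive.
Import Order.TTheory GRing.Theory Num.Theory.
Local Open Scope ring_scope.

(** The witness attached to a partition xi is the product, over the blocks X
    of xi, of the classical GHZ state (|0..0><0..0| + |1..1><1..1|)/2 on X.
    It is xi-uncorrelated, and it is zeta-uncorrelated only if xi refines zeta:
    if a block B of xi met a block C of zeta and its complement, then the
    diagonal entry at the basis vector that is 0 on C and 1 elsewhere would
    vanish (its restriction to B is not constant), although in the
    zeta-factorisation it is a product of factors seen at constant vectors,
    all nonzero.  So the witness of xi lies in C_{up(down xi)}; if that set
    equals C_{up(down ups)}, the witness is (down ups)-uncorrelated, whence
    xi refines ups, and down xi belongs to up(down ups), whence ups refines xi. *)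

Section Partitions.
Variable n : nat.
Implicit Types (x y z : {set {set 'I_n}}) (S : {set {set {set 'I_n}}}).

Lemma PI_partition x : x \in PI n -> partition x [set: 'I_n].
Proof. by rewrite inE. Qed.

Lemma pblock_PI x i : x \in PI n -> pblock x i \in x.
Proof. by move/PI_partition/cover_partition=> covx; rewrite pblock_mem // covx. Qed.

Lemma mem_pblock_PI x i : x \in PI n -> i \in pblock x i.
Proof. by move/PI_partition/cover_partition=> covx; rewrite mem_pblock covx. Qed.

Lemma def_pblock_PI x B i : x \in PI n -> B \in x -> i \in B -> pblock x i = B.
Proof. by move/PI_partition/partition_trivIset; apply: def_pblock. Qed.

Lemma PI_block_nonempty x B : x \in PI n -> B \in x -> exists i, i \in B.
Proof. by move/PI_partition/partition_neq0=> x_neq0 /x_neq0/set0Pn. Qed.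

Lemma finer_refl x : finer x x.
Proof. by apply/forall_inP=> B xB; apply/exists_inP; exists B. Qed.

Lemma finer_trans x y z : finer x y -> finer y z -> finer x z.
Proof.
move=> /forall_inP xy /forall_inP yz; apply/forall_inP=> B xB.
have /exists_inP [C yC BC] := xy B xB; have /exists_inP [D zD CD] := yz C yC.
by apply/exists_inP; exists D => //; apply: subset_trans CD.
Qed.

Lemma finer_anti x y : x \in PI n -> y \in PI n -> finer x y -> finer y x -> x = y.
Proof.
suff sub_xy x' y' : x' \in PI n -> finer x' y' -> finer y' x' -> x' \subset y'.
  by move=> PIx PIy xy yx; apply/eqP; rewrite eqEsubset !sub_xy.
move=> PIx /forall_inP xy /forall_inP yx; apply/subsetP=> B xB.
have /exists_inP [C yC BC] := xy B xB; have /exists_inP [D xD CD] := yx C yC.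
have [i Bi] := PI_block_nonempty PIx xB.
have BD : B = D.
  by rewrite -(def_pblock_PI PIx xB Bi) (def_pblock_PI PIx xD (subsetP CD _ (subsetP BC _ Bi))).
suff -> : B = C by [].
by apply/eqP; rewrite eqEsubset BC BD.
Qed.

Lemma mem_down_refl x : x \in PI n -> x \in down x.
Proof. by move=> PIx; rewrite inE PIx finer_refl. Qed.

Lemma down_sub_PII S x : S \in PII n -> x \in S -> down x \subset S.
Proof.
rewrite inE => /and3P [_ _ /forall_inP downS] Sx; apply/subsetP=> u.
by rewrite inE => /andP [PIu ux]; have /forall_inP/(_ u PIu)/implyP := downS x Sx; apply.
Qed.

Lemma down_PII x : x \in PI n -> down x \in PII n.
Proof.
move=> PIx; rewrite inE; apply/and3P; split.
- by apply/subsetP=> u; rewrite inE => /andP [].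
- by apply/set0Pn; exists x; apply: mem_down_refl.
- apply/forall_inP=> y; rewrite inE => /andP [_ yx]; apply/forall_inP=> u PIu.
  by apply/implyP=> uy; rewrite inE PIu (finer_trans uy yx).
Qed.

Lemma mem_up_refl S : S \in PII n -> S \in up S.
Proof. by move=> PII_S; rewrite inE PII_S subxx. Qed.

End Partitions.

Lemma psd_diagonal n (d : 'I_n -> nat) X (A : op d X) :
  (forall a b, a != b -> A a b = 0) -> (forall a, 0 <= A a a) -> psd A.
Proof.
move=> offdiag diag_ge0 v; apply: sumr_ge0 => a _.
rewrite (bigD1 a) //= big1 ?addr0; last first.
  by move=> b /negbTE ba; rewrite offdiag ?mulr0 ?mul0r // eq_sym ba.
by rewrite mulrC mulrA; apply: mulr_ge0 => //; apply: mul_conjC_ge0.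
Qed.

Lemma prodr_if_const (R : comNzRingType) (I : finType) (A : {pred I}) (P : pred I) (c : R) :
  \prod_(X in A) (if P X then c else 0) = if [forall X in A, P X] then c ^+ #|A| else 0.
Proof.
case: ifP => [/forall_inP AP | /forall_inP notAP].
  by rewrite -prodr_const; apply: eq_bigr => X /AP ->.
have [X AX /negbTE notPX] : exists2 X, X \in A & ~~ P X.
  by apply/exists_inP; rewrite -negb_forall_in; apply/negP => /forall_inP.
by rewrite (bigD1 X) //= notPX mul0r.
Qed.

Lemma exp_half_mulrn (R : numFieldType) k : (2^-1 : R) ^+ k *+ 2 ^ k = 1.
Proof. by rewrite -mulr_natr natrX -exprMn mulVf ?expr1n // pnatr_eq0. Qed.

Section GHZProduct.
Variables (n : nat) (d : 'I_n -> nat).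
Hypothesis d_gt1 : forall i, (1 < d i)%N.
Implicit Types (xi zeta : {set {set 'I_n}}) (X Y B C : {set 'I_n}).

(* the basis index 1 if [b], else 0 *)
Definition digit (b : bool) (i : 'I_n) : 'I_(d i) :=
  if b then Ordinal (d_gt1 i) else Ordinal (ltnW (d_gt1 i)).

Arguments digit : simpl never.

Lemma digit_inj b b' i : digit b i = digit b' i -> b = b'.
Proof. by case: b; case: b' => // /(congr1 val). Qed.

Definition const_conf X (b : bool) : conf d X := [ffun j => digit b (val j)].

Definition ghz_conf X (c : conf d X) : bool :=
  (c == const_conf X false) || (c == const_conf X true).

Definition ghz X : op d X :=
  fun c c' => if (c == c') && ghz_conf c then 2^-1 else 0.

Definition ghz_product xi : op d [set: 'I_n] :=
  fun a b => \prod_(X in xi) ghz (restr X a) (restr X b).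

Lemma const_conf_neq X : X != set0 -> const_conf X false != const_conf X true.
Proof.
case/set0Pn=> i Xi; apply/negP=> /eqP /(congr1 (fun c : conf d X => c (exist _ i Xi))).
by rewrite !ffunE => /digit_inj.
Qed.

Lemma restr_const_conf X b : restr X (const_conf [set: 'I_n] b) = const_conf X b.
Proof. by apply/ffunP=> j; rewrite !ffunE. Qed.

Lemma confT_exist (a : conf d [set: 'I_n]) (j : sub [set: 'I_n]) :
  a (exist (fun i => i \in [set: 'I_n]) (val j) (in_setT (val j))) = a j.
Proof. by case: j => i p /=; rewrite (bool_irrelevance p (in_setT i)). Qed.

Lemma density_ghz X : X != set0 -> density (ghz (X := X)).
Proof.
move=> X_neq0; split.
  apply: psd_diagonal => [a b /negbTE ab|a]; first by rewrite /ghz ab.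
  by rewrite /ghz; case: ifP => // _; rewrite invr_ge0 ler0n.
rewrite /trace (bigD1 (const_conf X false)) //= (bigD1 (const_conf X true)) /=; last first.
  by rewrite eq_sym const_conf_neq.
rewrite big1 ?addr0; last first.
  by move=> c /andP [c0 c1]; rewrite /ghz /ghz_conf (negbTE c0) (negbTE c1) andbF.
by rewrite /ghz /ghz_conf !eqxx orbT -mulr2n (exp_half_mulrn _ 1).
Qed.

Lemma ghz_product_diag xi a :
  ghz_product xi a a = if [forall X in xi, ghz_conf (restr X a)] then 2^-1 ^+ #|xi| else 0.
Proof. by rewrite /ghz_product /ghz -prodr_if_const; apply: eq_bigr => X _; rewrite eqxx. Qed.

Lemma ghz_product_offdiag xi a b : xi \in PI n -> a != b -> ghz_product xi a b = 0.
Proof.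
move=> PIxi ab.
have [j abj] : exists j, a j != b j.
  apply/existsP; rewrite -negb_forall; apply: contra ab => /forallP ab_eq.
  by apply/eqP/ffunP=> j; apply/eqP.
set X := pblock xi (val j); have jX : val j \in X by apply: mem_pblock_PI.
rewrite /ghz_product (bigD1 X) ?pblock_PI //= /ghz.
suff /negbTE -> : restr X a != restr X b by rewrite mul0r.
apply: contra abj => /eqP /(congr1 (fun c : conf d X => c (exist _ (val j) jX))).
by rewrite !ffunE !confT_exist => ->.
Qed.

Definition block_conf xi (u : {ffun {set 'I_n} -> bool}) : conf d [set: 'I_n] :=
  [ffun j => digit (u (pblock xi (val j))) (val j)].

Lemma restr_block_conf xi u X :
  xi \in PI n -> X \in xi -> restr X (block_conf xi u) = const_conf X (u X).
Proof. by move=> PIxi xiX; apply/ffunP=> j; rewrite !ffunE (def_pblock_PI PIxi xiX (valP j)). Qed.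

Lemma ghz_support xi : xi \in PI n ->
  [set a : conf d [set: 'I_n] | [forall X in xi, ghz_conf (restr X a)]] =
  block_conf xi @: pffun_on false xi predT.
Proof.
move=> PIxi; apply/setP=> a; rewrite inE; apply/idP/idP.
- move/forall_inP=> a_ghz.
  pose u := [ffun X => (X \in xi) && (restr X a == const_conf X true)].
  apply/imsetP; exists u.
    by apply/pffun_onP; split=> //; apply/supportP=> X /negbTE; rewrite ffunE => ->.
  apply/ffunP=> j; rewrite !ffunE.
  set X := pblock xi (val j); have xiX : X \in xi by apply: pblock_PI.
  have jX : val j \in X by apply: mem_pblock_PI.
  have <- : restr X a (exist _ (val j) jX) = a j by rewrite ffunE confT_exist.
  have X_neq0 : X != set0 by apply/set0Pn; exists (val j).
  rewrite xiX; case/orP: (a_ghz X xiX) => /eqP ->; rewrite ffunE ?eqxx //.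
  by rewrite (negbTE (const_conf_neq X_neq0)).
- case/imsetP=> u _ ->; apply/forall_inP=> X xiX.
  by rewrite restr_block_conf // /ghz_conf; case: (u X); rewrite eqxx ?orbT.
Qed.

Lemma block_conf_inj xi : xi \in PI n -> {in pffun_on false xi predT &, injective (block_conf xi)}.
Proof.
move=> PIxi u u' /pffun_onP [/supportP u0 _] /pffun_onP [/supportP u'0 _] uu'.
apply/ffunP=> X; have [xiX|/[dup] /u0 -> /u'0 -> //] := boolP (X \in xi).
have [i Xi] := PI_block_nonempty PIxi xiX.
move/(congr1 (fun a : conf d [set: 'I_n] => a (exist _ i (in_setT i)))): uu'.
by rewrite !ffunE /= (def_pblock_PI PIxi xiX Xi) => /digit_inj.
Qed.

Lemma card_ghz_support xi : xi \in PI n ->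
  #|[set a : conf d [set: 'I_n] | [forall X in xi, ghz_conf (restr X a)]]| = (2 ^ #|xi|)%N.
Proof.
move=> PIxi; rewrite ghz_support // card_in_imset ?card_pffun_on ?card_bool //.
exact: block_conf_inj.
Qed.

Lemma density_ghz_product xi : xi \in PI n -> density (ghz_product xi).
Proof.
move=> PIxi; split.
  apply: psd_diagonal => [a b|a]; first exact: ghz_product_offdiag.
  by rewrite ghz_product_diag; case: ifP => // _; rewrite exprn_ge0 // invr_ge0 ler0n.
rewrite /trace (eq_bigr _ (fun a _ => ghz_product_diag xi a)) -big_mkcond /=.
rewrite -(eq_bigl _ _ (fun a => in_set (fun a => [forall X in xi, ghz_conf (restr X a)]) a)).
by rewrite sumr_const card_ghz_support // exp_half_mulrn.
Qed.

Lemma D_unc_ghz_product xi : xi \in PI n -> D_unc xi (ghz_product xi).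
Proof.
move=> PIxi; split; first exact: density_ghz_product.
exists (fun X => ghz (X := X)); split=> // X xiX.
by apply: density_ghz; apply/set0Pn; apply: PI_block_nonempty xiX.
Qed.

Lemma ghz_product_const_neq0 xi b :
  ghz_product xi (const_conf [set: 'I_n] b) (const_conf [set: 'I_n] b) != 0.
Proof.
rewrite ghz_product_diag; case: ifP => [_|/forall_inP []].
  by rewrite expf_neq0 // invr_neq0 // pnatr_eq0.
by move=> X _; rewrite restr_const_conf /ghz_conf; case: b; rewrite eqxx ?orbT.
Qed.

Definition split_conf C : conf d [set: 'I_n] := [ffun k => digit (val k \notin C) (val k)].

Lemma restr_split_conf zeta C Y : zeta \in PI n -> C \in zeta -> Y \in zeta ->
  restr Y (split_conf C) = restr Y (const_conf [set: 'I_n] (Y != C)).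
Proof.
move=> PIzeta zetaC zetaY; apply/ffunP=> k; rewrite !ffunE /=.
suff -> : (val k \notin C) = (Y != C) by [].
have [<-|YC] := eqVneq Y C; first by rewrite (valP k).
apply: contra YC => kC.
by rewrite -(def_pblock_PI PIzeta zetaY (valP k)) (def_pblock_PI PIzeta zetaC kC).
Qed.

Lemma ghz_product_split_conf xi B C i j : B \in xi ->
  i \in B -> i \in C -> j \in B -> j \notin C ->
  ghz_product xi (split_conf C) (split_conf C) = 0.
Proof.
move=> xiB Bi Ci Bj Cj; rewrite ghz_product_diag; case: ifP => // /forall_inP /(_ B xiB).
case/orP=> /eqP; [move=> /(congr1 (fun c : conf d B => c (exist _ j Bj)))
                 |move=> /(congr1 (fun c : conf d B => c (exist _ i Bi)))].
  by rewrite !ffunE /= Cj => /digit_inj.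
by rewrite !ffunE /= Ci => /digit_inj.
Qed.

Lemma D_unc_ghz_product_finer xi zeta : xi \in PI n -> zeta \in PI n ->
  D_unc zeta (ghz_product xi) -> finer xi zeta.
Proof.
move=> PIxi PIzeta [_ [f [_ factor_f]]]; apply/forall_inP=> B xiB; apply: contraT => notBC.
have [i Bi] := PI_block_nonempty PIxi xiB.
set C := pblock zeta i.
have zetaC : C \in zeta by apply: pblock_PI.
have [j Bj Cj] : exists2 j, j \in B & j \notin C.
  by apply/subsetPn; apply: contra notBC => BC; apply/exists_inP; exists C.
have f_const_neq0 b Y : Y \in zeta ->
    f Y (restr Y (const_conf [set: 'I_n] b)) (restr Y (const_conf [set: 'I_n] b)) != 0.
  move=> zetaY; apply: contraNneq (ghz_product_const_neq0 xi b) => fY0.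
  by rewrite factor_f; apply/prodf_eq0; exists Y; rewrite ?fY0.
have := ghz_product_split_conf xiB Bi (mem_pblock_PI i PIzeta) Bj Cj.
rewrite factor_f => /eqP /prodf_eq0 [Y zetaY].
by rewrite (restr_split_conf PIzeta zetaC zetaY) (negbTE (f_const_neq0 _ _ zetaY)).
Qed.

Lemma C_unc_ghz_product xi : xi \in PI n -> C_unc (up (down xi)) (ghz_product xi).
Proof.
move=> PIxi; split=> S; last first.
  rewrite inE => /andP [_ /subsetP sub_S].
  by exists xi; [apply/sub_S/mem_down_refl | apply: D_unc_ghz_product].
move=> PII_S; rewrite inE PII_S /= => notS [zeta S_zeta unc_zeta].
have PIzeta : zeta \in PI n by move: PII_S; rewrite inE => /and3P [/subsetP ->].
have S_xi : xi \in S.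
  apply: subsetP (down_sub_PII PII_S S_zeta) _ _.
  by rewrite inE PIxi (D_unc_ghz_product_finer PIxi PIzeta unc_zeta).
by case/negP: notS; apply: down_sub_PII.
Qed.

End GHZProduct.

Theorem proposition4 (n : nat) (d : 'I_n -> nat)
  (hn : (0 < n)%N) (hd : forall i, (1 < d i)%N)
  (xi ups : {set {set 'I_n}}) (hxi : xi \in PI n) (hups : ups \in PI n) :
  (forall rho : op d [set: 'I_n],
      C_unc (up (down xi)) rho <-> C_unc (up (down ups)) rho)
  <-> xi = ups.
Proof.
split=> [sameC|-> //].
have [notDS DS] := (sameC (ghz_product hd xi)).1 (C_unc_ghz_product hd hxi).
apply: finer_anti => //.
- have [zeta] := DS (down ups) (mem_up_refl (down_PII hups)).
  rewrite inE => /andP [PIzeta zeta_ups] /(D_unc_ghz_product_finer hxi PIzeta).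
  by move/finer_trans; apply.
- have : down xi \in up (down ups).
    apply: contraT => notup; case: (notDS _ (down_PII hxi) notup).
    by exists xi; [apply: mem_down_refl | apply: D_unc_ghz_product].
  rewrite inE => /andP [_ /subsetP/(_ ups (mem_down_refl hups))].
  by rewrite inE => /andP [].
Qed.
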